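(* Let $R=k\{x_1,\ldots,x_n;\,Q,\preceq\}$ be a PBW algebra and use TOP on both $R^s$ (built from $\preceq$) and $(R^{\rm env})^s$ (built from the chosen order on $\mathbb{N}^{2n}$), or POT on both. (a) If the order on $R^{\rm env}$ is $\preceq^*$ or $\preceq^c$ and $\mathbf h\in(R^{\rm env})^s$ satisfies $\exp(\mathbf h)=((\alpha,0),i)\in\mathbb{N}^{2n,(s)}$, then $\mathbf h\notin\mathrm{Ker}(\mathfrak m^s)$ and $\exp(\mathfrak m^s(\mathbf h))=(\alpha,i)$. (b) If the order on $R^{\rm env}$ is $\preceq_*$ or $\preceq_c$ and $\exp(\mathbf h)=((0,\alpha),i)$, then $\mathbf h\notin\mathrm{Ker}(\mathfrak m^s)$ and $\exp(\mathfrak m^s(\mathbf h))=(\alpha^{\rm op},i)$.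
   Context: $k$ is a field; $x^\alpha=x_1^{\alpha_1}\cdots x_n^{\alpha_n}$. A PBW algebra $R=k\{x_1,\ldots,x_n;Q,\preceq\}$ is a quotient of $k\langle x_1,\ldots,x_n\rangle$ by the two-sided ideal generated by $Q=\{x_jx_i-q_{ji}x_ix_j-p_{ji};\,i<j\}$, $q_{ji}\in k^*$, each $p_{ji}$ a combination of standard monomials with exponents $\prec\epsilon_i+\epsilon_j$ for an admissible order $\preceq$ (total, compatible with addition, $0$ minimal), such that the standard monomials form a $k$-basis. $R^{\rm env}=R\otimes_kR^{\rm op}$ is regarded as the PBW algebra in the variables $x_1\otimes1,\ldots,x_n\otimes1,1\otimes x_n,\ldots,1\otimes x_1$ (in this order); the exponent $(\alpha,\beta)\in\mathbb N^{2n}$ corresponds to the monomial $x^\alpha\otimes x^{\beta^{\rm op}}$, where $\beta^{\rm op}=(\beta_n,\ldots,\beta_1)$. Let $\alpha\preceq^{\rm op}\beta$ iff $\alpha^{\rm op}\preceq\beta^{\rm op}$. Orders on $\mathbb N^{2n}$: $(\alpha,\beta)\prec^*(\gamma,\delta)$ iff $\beta\prec^{\rm op}\delta$, or $\beta=\delta$ and $\alpha\prec\gamma$; $(\alpha,\beta)\prec_*(\gamma,\delta)$ iff $\alpha\prec\gamma$, or $\alpha=\gamma$ and $\beta\prec^{\rm op}\delta$; $(\alpha,\beta)\prec^c(\gamma,\delta)$ iff $\alpha+\beta^{\rm op}\prec\gamma+\delta^{\rm op}$, or equality and $\beta^{\rm op}\prec\delta^{\rm op}$; $(\alpha,\beta)\prec_c(\gamma,\delta)$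 iff $\alpha+\beta^{\rm op}\prec\gamma+\delta^{\rm op}$, or equality and $\alpha\prec\gamma$. For an admissible order $\le$ on $\mathbb N^m$, $\mathbb N^{m,(s)}=\mathbb N^m\times\{1,\ldots,s\}$ carries TOP: $(\alpha,i)<(\beta,j)$ iff $\alpha<\beta$, or $\alpha=\beta$ and $i>j$; and POT: $(\alpha,i)<(\beta,j)$ iff $i>j$, or $i=j$ and $\alpha<\beta$. A nonzero element of $A^s$ ($A=R$ or $R^{\rm env}$, basis $\mathbf e_i$) is uniquely $\sum c_{(\alpha,i)}x^\alpha\mathbf e_i$, and $\exp$ is the largest $(\alpha,i)$ with $c_{(\alpha,i)}\ne0$. $\mathfrak m^s:(R^{\rm env})^s\to R^s$ applies $\mathfrak m(r\otimes r')=rr'$ coordinatewise. *)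

From HB Require Import structures.
From mathcomp Require Import all_boot all_order all_algebra.
From mathcomp Require Import finmap.
Set Implicit Arguments. Unset Strict Implicit. Unset Printing Implicit Defensive.
Import Order.TTheory GRing.Theory.
Local Open Scope ring_scope.

Definition expo (n : nat) := {ffun 'I_n -> nat}.
Definition eadd n (a b : expo n) : expo n := [ffun i => (a i + b i)%N].
Definition ezero n : expo n := [ffun => 0%N].
Definition eps n (i : 'I_n) : expo n := [ffun j => nat_of_bool (i == j)].
Definition eop n (a : expo n) : expo n := [ffun i => a (rev_ord i)].

Definition admissible n (le : rel (expo n)) : Prop :=
  [/\ reflexive le, antisymmetric le, transitive le & total le] /\
  (forall a b c, le a b -> le (eadd a c) (eadd b c)) /\
  (forall a, le (ezero n) a).

Definition strict (T : eqType) (le : rel T) : rel T := fun a b => (a != b) && le a b.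

Definition mono (k : fieldType) (R : algType k) n (x : 'I_n -> R) (a : expo n) : R :=
  \prod_(i < n) x i ^+ a i.

Definition rcoord (k : fieldType) (R : algType k) n (x : 'I_n -> R) (r : R)
    (c : {fsfun expo n -> k with 0}) : Prop :=
  r = \sum_(a <- finsupp c) c a *: mono x a.

Definition PBW (k : fieldType) (R : algType k) n (x : 'I_n -> R)
    (le : rel (expo n)) (q : 'I_n -> 'I_n -> k)
    (p : 'I_n -> 'I_n -> {fsfun expo n -> k with 0}) : Prop :=
  admissible le /\
  [/\ (forall i j : 'I_n, (i < j)%N -> q j i != 0),
      (forall i j : 'I_n, (i < j)%N -> forall a, a \in finsupp (p j i) ->
          strict le a (eadd (eps i) (eps j))),
      (forall i j : 'I_n, (i < j)%N ->
          x j * x i = q j i *: (x i * x j) + \sum_(a <- finsupp (p j i)) p j i a *: mono x a),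
      (forall r : R, exists c, rcoord x r c)
    & (forall c : {fsfun expo n -> k with 0},
          \sum_(a <- finsupp c) c a *: mono x a = 0 -> forall a, c a = 0)].

Definition ltop n (lt : rel (expo n)) : rel (expo n) := fun a b => lt (eop a) (eop b).
Definition env_star n (lt : rel (expo n)) : rel (expo n * expo n) := fun x y =>
  ltop lt x.2 y.2 || ((x.2 == y.2) && lt x.1 y.1).
Definition env_lstar n (lt : rel (expo n)) : rel (expo n * expo n) := fun x y =>
  lt x.1 y.1 || ((x.1 == y.1) && ltop lt x.2 y.2).
Definition env_c n (lt : rel (expo n)) : rel (expo n * expo n) := fun x y =>
  lt (eadd x.1 (eop x.2)) (eadd y.1 (eop y.2)) ||
  ((eadd x.1 (eop x.2) == eadd y.1 (eop y.2)) && lt (eop x.2) (eop y.2)).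
Definition env_lc n (lt : rel (expo n)) : rel (expo n * expo n) := fun x y =>
  lt (eadd x.1 (eop x.2)) (eadd y.1 (eop y.2)) ||
  ((eadd x.1 (eop x.2) == eadd y.1 (eop y.2)) && lt x.1 y.1).

Definition TOP (T : eqType) s (lt : rel T) : rel (T * 'I_s) := fun x y =>
  lt x.1 y.1 || ((x.1 == y.1) && (y.2 < x.2)%N).
Definition POT (T : eqType) s (lt : rel T) : rel (T * 'I_s) := fun x y =>
  (y.2 < x.2)%N || ((x.2 == y.2) && lt x.1 y.1).
Definition modord (top : bool) (T : eqType) s (lt : rel T) : rel (T * 'I_s) :=
  if top then TOP lt else POT lt.

Definition Rexp (k : fieldType) (R : algType k) n s (x : 'I_n -> R)
    (ltm : rel (expo n * 'I_s)) (v : 'I_s -> R) (e : expo n * 'I_s) : Prop :=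
  exists c : 'I_s -> {fsfun expo n -> k with 0},
    [/\ forall i, rcoord x (v i) (c i),
        c e.2 e.1 != 0
      & forall e', c e'.2 e'.1 != 0 -> e' = e \/ ltm e' e].

(* Elements of (R^env)^s, given by their (finitely supported) coordinates in the
   basis (x^alpha (x) x^{beta^op}) e_i, indexed by ((alpha,beta), i). *)
Definition envvec (k : fieldType) n s := {fsfun (expo n * expo n * 'I_s) -> k with 0}.

Definition Eexp (k : fieldType) n s (ltm : rel (expo n * expo n * 'I_s))
    (h : envvec k n s) (e : expo n * expo n * 'I_s) : Prop :=
  h e != 0 /\ forall e', h e' != 0 -> e' = e \/ ltm e' e.

(* m^s : (R^env)^s -> R^s, m(r (x) r') = r r', so
   m(x^alpha (x) x^{beta^op}) = x^alpha x^{beta^op}. *)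
Definition ms (k : fieldType) (R : algType k) n s (x : 'I_n -> R)
    (h : envvec k n s) : 'I_s -> R := fun i =>
  \sum_(t <- finsupp h | t.2 == i) h t *: (mono x t.1.1 * mono x (eop t.1.2)).

(* In a PBW algebra the product x^a x^b expands into standard monomials whose
   exponents are <= a + b: rewrite the word of x^a x^b with the commutation
   relations, by well-founded induction on the admissible order (a well-order
   by Dickson's lemma) and, for fixed exponent, on the number of inversions of
   the word.  Hence, for every term ((beta, gamma), j) of h that lies below
   ((alpha, 0), i) for <=^* or <=^c, m(x^beta (x) x^(gamma^op)) only involves
   monomials of exponent below alpha, so the coefficient of (alpha, i) in
   m^s(h) is the nonzero leading coefficient of h and every other term of
   m^s(h) lies below (alpha, i).  Part (b) is symmetric. *)

From HB Require Import structures.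
From mathcomp Require Import all_boot all_order all_algebra.
From mathcomp Require Import finmap zify.
From Stdlib Require Import Classical ClassicalEpsilon.
Set Implicit Arguments. Unset Strict Implicit. Unset Printing Implicit Defensive.
Import GRing.Theory.
Local Open Scope ring_scope.

Lemma ex_minn_classic (P : nat -> Prop) :
  (exists v, P v) -> exists2 v, P v & forall w, P w -> (v <= w)%N.
Proof.
case=> v Pv; elim: v {-2}v (leqnn v) Pv => [|m IH] v Hv Pv.
  by exists v => // w _; rewrite leqn0 in Hv; rewrite (eqP Hv).
have [[w [Pw lt_wv]]|nlt] := classic (exists w, P w /\ (w < v)%N).
  by apply: (IH w) => //; rewrite -ltnS; apply: leq_trans lt_wv Hv.
exists v => // w Pw; rewrite leqNgt; apply/negP => lt_wv; apply: nlt; by exists w.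
Qed.

Lemma nondecreasing_subseq (g : nat -> nat) : exists phi : nat -> nat,
  (forall m, (phi m < phi m.+1)%N) /\ (forall m, (g (phi m) <= g (phi m.+1))%N).
Proof.
(* Jump each time to an index after the current one where [g] is minimal. *)
have next_min j : exists i, (j < i)%N /\ forall i', (j < i')%N -> (g i <= g i')%N.
  have [v [i [lt_ji <-]] min_v] := @ex_minn_classic
    (fun v => exists i, (j < i)%N /\ g i = v) (ex_intro _ _ (ex_intro _ j.+1 (conj (ltnSn j) erefl))).
  by exists i; split => // i' lt_ji'; apply: min_v; exists i'.
have [nxt Hnxt] := choice _ next_min.
exists (fun m => iter m.+1 nxt 0%N); split => m; first exact: (Hnxt _).1.
by apply: (Hnxt _).2; apply: ltn_trans (Hnxt _).1 (Hnxt _).1.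
Qed.

Lemma dickson n (f : nat -> expo n) :
  exists i j, (i < j)%N /\ forall l, (f i l <= f j l)%N.
Proof.
suff /(_ n) [phi [inc ch]] : forall m, exists phi : nat -> nat,
    (forall a, (phi a < phi a.+1)%N) /\
    forall l : 'I_n, (l < m)%N -> forall a, (f (phi a) l <= f (phi a.+1) l)%N.
  by exists (phi 0%N), (phi 1%N); split=> // l; apply: ch.
elim=> [|m [phi [inc ch]]]; first by exists id.
have [lt_mn|le_nm] := ltnP m n; last first.
  by exists phi; split => // l _; apply: ch; apply: leq_trans (ltn_ord l) le_nm.
have [psi [inc_psi ch_psi]] := nondecreasing_subseq (fun a => f (phi a) (Ordinal lt_mn)).
have phi_mono : {homo phi : a b / (a < b)%N >-> (a < b)%N}.
  by apply: homo_ltn => //; apply: ltn_trans.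
exists (phi \o psi); split => [a|l]; first exact: phi_mono.
rewrite ltnS leq_eqVlt => /orP[/eqP l_m|lt_lm] a.
  by rewrite (_ : l = Ordinal lt_mn); [exact: ch_psi | exact: val_inj].
have fl_mono : {homo (fun b => f (phi b) l) : a b / (a <= b)%N >-> (a <= b)%N}.
  by apply: homo_leq => // [???|b]; [apply: leq_trans | apply: ch].
exact/fl_mono/ltnW.
Qed.

Section AdmissibleOrder.
Variables (n : nat) (le : rel (expo n)).
Hypothesis adm : admissible le.

Lemma adm_refl a : le a a. Proof. by case: adm => [[]]. Qed.

Lemma adm_trans a b c : le a b -> le b c -> le a c.
Proof. by case: adm => [[_ _ tr _]] _; apply: tr. Qed.

Lemma adm_anti a b : le a b -> le b a -> a = b.
Proof. by case: adm => [[_ an _ _]] _ ab ba; apply: an; rewrite ab ba. Qed.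

Lemma adm_addr c a b : le a b -> le (eadd a c) (eadd b c).
Proof. by case: adm => _ [+ _]; apply. Qed.

Lemma adm_ge0 a : le (ezero n) a. Proof. by case: adm => _ []. Qed.

Lemma strict_irr a : ~~ strict le a a. Proof. by rewrite /strict eqxx. Qed.

Lemma strict_ge0 a : ~~ strict le a (ezero n).
Proof. by apply/andP => -[/eqP ne le_a0]; apply/ne/adm_anti/adm_ge0. Qed.

Lemma le_strict_trans a b c : le a b -> strict le b c -> strict le a c.
Proof.
move=> le_ab /andP[ne_bc le_bc]; rewrite /strict (adm_trans le_ab le_bc) andbT.
by apply: contra ne_bc => /eqP eq_ac; rewrite -eq_ac in le_bc *; rewrite (adm_anti le_ab le_bc).
Qed.

Lemma strict_addr c a b : strict le a b -> strict le (eadd a c) (eadd b c).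
Proof.
move=> /andP[ne_ab le_ab]; rewrite /strict adm_addr // andbT.
apply: contra ne_ab => /eqP/ffunP eq_ac; apply/eqP/ffunP => l.
by have := eq_ac l; rewrite !ffunE => /addIn.
Qed.

Lemma adm_cw (a b : expo n) : (forall l, (a l <= b l)%N) -> le a b.
Proof.
move=> le_ab; have := adm_addr a (adm_ge0 [ffun l => (b l - a l)%N]).
by congr le; apply/ffunP => l; rewrite !ffunE // subnK.
Qed.

Lemma adm_wf : well_founded (strict le).
Proof.
move=> a0; apply: NNPP => nacc.
have step a : ~ Acc (strict le) a -> exists b, strict le b a /\ ~ Acc (strict le) b.
  move=> na; apply: NNPP => nex; apply: na; constructor => b ba.
  by apply: NNPP => nb; apply: nex; exists b.
pose next a := epsilon (inhabits a) (fun b => strict le b a /\ ~ Acc (strict le) b).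
have Hnext a : ~ Acc (strict le) a -> strict le (next a) a /\ ~ Acc (strict le) (next a).
  by move=> na; apply: (epsilon_spec (inhabits a) _ (step a na)).
pose f m := iter m next a0.
have nf m : ~ Acc (strict le) (f m) by elim: m => //= m IH; apply: (Hnext _ IH).2.
have chain i j : (i < j)%N -> strict le (f j) (f i).
  elim: j => // j IH; rewrite ltnS leq_eqVlt => /orP[/eqP->|lt_ij].
    exact: (Hnext _ (nf j)).1.
  by apply: le_strict_trans (IH lt_ij); case/andP: (Hnext _ (nf j)).1.
have [i [j [lt_ij le_ij]]] := dickson f.
have /andP[/eqP ne_ji le_ji] := chain _ _ lt_ij.
by apply: ne_ji; apply: adm_anti le_ji (adm_cw le_ij).
Qed.

End AdmissibleOrder.

Lemma eadd0l n (a : expo n) : eadd (ezero n) a = a.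
Proof. by apply/ffunP => l; rewrite !ffunE. Qed.

Lemma eadd0r n (a : expo n) : eadd a (ezero n) = a.
Proof. by apply/ffunP => l; rewrite !ffunE addn0. Qed.

Lemma eop0 n : eop (ezero n) = ezero n.
Proof. by apply/ffunP => l; rewrite !ffunE. Qed.

Lemma modord_irr (T : eqType) m top (lt : rel T) (E : T) (i : 'I_m) :
  (forall a, ~~ lt a a) -> ~~ modord top lt (E, i) (E, i).
Proof. by move=> irr; case: top; rewrite /modord /TOP /POT /= ltnn (negbTE (irr E)) ?andbF. Qed.

Lemma prodr_mull_at (A : pzRingType) m (f g : 'I_m -> A) (y : A) (i0 : nat) :
  (i0 < m)%N -> (forall i : 'I_m, (i < i0)%N -> f i = 1) ->
  (forall i : 'I_m, val i != i0 -> g i = f i) ->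
  (forall i : 'I_m, val i = i0 -> g i = y * f i) ->
  \prod_(i < m) g i = y * \prod_(i < m) f i.
Proof.
elim: m f g i0 => [|m IH] f g [|i0] // lt_i0m f1 gf gy; rewrite !big_ord_recl.
  by rewrite gy // mulrA; congr (_ * _); apply: eq_bigr => i _; apply: gf.
rewrite gf // f1 // !mul1r.
apply: (IH (f \o lift ord0) (g \o lift ord0) i0) => // i /= Hi.
- exact: f1.
- by apply: gf; rewrite /= eqSS.
- by apply: gy; rewrite /= Hi.
Qed.

Section PBWAlgebra.
Variables (k : fieldType) (R : algType k) (n : nat) (x : 'I_n -> R) (le : rel (expo n))
  (q : 'I_n -> 'I_n -> k) (p : 'I_n -> 'I_n -> {fsfun expo n -> k with 0}).
Hypothesis HPBW : PBW x le q p.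

Let pbw_adm : admissible le. Proof. by case: HPBW. Qed.

Let pbw_supp (i j : 'I_n) (a : expo n) : (i < j)%N -> a \in finsupp (p j i) ->
  strict le a (eadd (eps i) (eps j)).
Proof. by case: HPBW => _ [_ + _ _ _] lt_ij; apply. Qed.

Let pbw_comm (i j : 'I_n) : (i < j)%N ->
  x j * x i = q j i *: (x i * x j) + \sum_(a <- finsupp (p j i)) p j i a *: mono x a.
Proof. by case: HPBW => _ [_ _ + _ _]; apply. Qed.

Let pbw_free (c : {fsfun expo n -> k with 0}) :
  \sum_(a <- finsupp c) c a *: mono x a = 0 -> forall a : expo n, c a = 0.
Proof. by case: HPBW => _ [_ _ _ _]; apply. Qed.

Definition lcomb (s : seq (k * expo n)) : R := \sum_(z <- s) z.1 *: mono x z.2.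

Definition spanned (P : expo n -> Prop) (r : R) :=
  exists2 s, r = lcomb s & forall z, z \in s -> P z.2.

Lemma lcomb_cat s1 s2 : lcomb (s1 ++ s2) = lcomb s1 + lcomb s2.
Proof. exact: big_cat. Qed.

Lemma spanned0 P : spanned P 0. Proof. by exists [::] => //; rewrite /lcomb big_nil. Qed.

Lemma spannedD P r1 r2 : spanned P r1 -> spanned P r2 -> spanned P (r1 + r2).
Proof.
move=> [s1 -> P1] [s2 -> P2]; exists (s1 ++ s2); first by rewrite lcomb_cat.
by move=> z; rewrite mem_cat => /orP[/P1|/P2].
Qed.

Lemma spannedZ P a r : spanned P r -> spanned P (a *: r).
Proof.
move=> [s -> Ps]; exists [seq (a * z.1, z.2) | z <- s]; last by move=> _ /mapP[z /Ps + ->].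
by rewrite /lcomb big_map scaler_sumr; apply: eq_bigr => z _; rewrite scalerA.
Qed.

Lemma spanned_mono (P : expo n -> Prop) a : P a -> spanned P (mono x a).
Proof.
by move=> Pa; exists [:: (1, a)]; [rewrite /lcomb big_seq1 scale1r | move=> z /[!inE] /eqP->].
Qed.

Lemma spanned_sum P (I : Type) (r : seq I) (Q : pred I) (F : I -> R) :
  (forall i, Q i -> spanned P (F i)) -> spanned P (\sum_(i <- r | Q i) F i).
Proof. by move=> PF; apply: (big_ind (spanned P)); [exact: spanned0 | exact: spannedD |]. Qed.

Lemma sub_spanned (P P' : expo n -> Prop) r :
  (forall a, P a -> P' a) -> spanned P r -> spanned P' r.
Proof. by move=> PP' [s -> Ps]; exists s => // z /Ps/PP'. Qed.

Definition wprod (w : seq 'I_n) : R := \prod_(i <- w) x i.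

Definition wexp (w : seq 'I_n) : expo n := [ffun l => count_mem l w].

Fixpoint inversions (w : seq 'I_n) : nat :=
  if w is h :: t then (count (fun y : 'I_n => (y < h)%N) t + inversions t)%N else 0%N.

Definition word (a : expo n) : seq 'I_n :=
  flatten [seq nseq (a i) i | i <- index_enum 'I_n].

Lemma wprod_cat w1 w2 : wprod (w1 ++ w2) = wprod w1 * wprod w2.
Proof. exact: big_cat. Qed.

Lemma wprod_word a : wprod (word a) = mono x a.
Proof.
rewrite /wprod /word big_flatten big_map /mono; apply: eq_bigr => i _.
by rewrite big_nseq; elim: (a i) => [|m IH] //=; rewrite exprS IH.
Qed.

Lemma wexp_word a : wexp (word a) = a.
Proof.
apply/ffunP => l; rewrite ffunE /word count_flatten -map_comp sumnE big_map.
rewrite (bigD1 l) //= big1 => [|i ne_il]; rewrite count_nseq /=.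
  by rewrite eqxx mul1n addn0.
by rewrite (negbTE ne_il).
Qed.

Lemma wexp_splice u w v : wexp (u ++ w ++ v) = eadd (wexp w) (wexp (u ++ v)).
Proof. by apply/ffunP => l; rewrite !ffunE !count_cat addnCA. Qed.

Lemma inversions_swap u v (i j : 'I_n) : (i < j)%N ->
  inversions (u ++ j :: i :: v) = (inversions (u ++ i :: j :: v)).+1.
Proof.
move=> lt_ij; elim: u => [|h u IH] /=; last by rewrite IH !count_cat /=; lia.
by rewrite lt_ij ltnNge (ltnW lt_ij) /=; lia.
Qed.

Lemma inversions_gt0 w : (0 < inversions w)%N ->
  exists u v (i j : 'I_n), (i < j)%N /\ w = u ++ j :: i :: v.
Proof.
elim: w => [|h t IH] //=.
have [t0|/IH[u [v [i [j [lt_ij ->]]]]] _] := posnP (inversions t); last first.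
  by exists (h :: u), v, i, j.
rewrite t0 addn0; case: t t0 {IH} => [|y t] //= /eqP.
rewrite addn_eq0 => /andP[/eqP no_lt_y _].
have [lt_yh _|le_hy] := ltnP y h; first by exists [::], t, y, h.
rewrite /= -has_count => /hasP[z zt lt_zh].
suff : has (fun z : 'I_n => (z < y)%N) t by rewrite has_count no_lt_y.
by apply/hasP; exists z => //; apply: leq_trans lt_zh le_hy.
Qed.

Lemma mono_eps_addl (a : expo n) (h : 'I_n) :
  (forall l : 'I_n, (l < h)%N -> a l = 0%N) -> mono x (eadd (eps h) a) = x h * mono x a.
Proof.
move=> a0; apply: (@prodr_mull_at _ _ _ _ _ h) => // i.
- by move=> /a0 ->.
- by move=> ne_ih; rewrite !ffunE (_ : (h == i) = false) //; apply: contraNF ne_ih => /eqP ->.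
- by move=> /val_inj ->; rewrite !ffunE eqxx add1n exprS.
Qed.

Lemma inversions0_wprod w : inversions w = 0%N -> wprod w = mono x (wexp w).
Proof.
elim: w => [_|h t IH /eqP]; first by rewrite /wprod big_nil /mono big1 // => i _; rewrite ffunE.
rewrite addn_eq0 => /andP[/eqP count0 /eqP/IH t_mono].
have /hasPn no_lt_h : ~~ has (fun y : 'I_n => (y < h)%N) t by rewrite has_count count0.
have -> : wexp (h :: t) = eadd (eps h) (wexp t) by apply/ffunP => l; rewrite !ffunE.
rewrite /wprod big_cons -/(wprod t) t_mono mono_eps_addl // => l lt_lh.
by rewrite ffunE; apply/count_memPn; apply: contraL lt_lh => /no_lt_h.
Qed.

Lemma wprod_swap u v (i j : 'I_n) : (i < j)%N ->
  wprod (u ++ j :: i :: v) = q j i *: wprod (u ++ i :: j :: v) +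
    \sum_(a <- finsupp (p j i)) p j i a *: wprod (u ++ word a ++ v).
Proof.
move=> lt_ij; have -> : wprod (u ++ j :: i :: v) = wprod u * (x j * x i) * wprod v.
  by rewrite wprod_cat /wprod !big_cons !mulrA.
rewrite pbw_comm // mulrDr mulrDl; congr (_ + _).
  by rewrite -scalerAr -scalerAl wprod_cat /wprod !big_cons !mulrA.
rewrite big_distrr big_distrl; apply: eq_bigr => a _ /=.
by rewrite -scalerAr -scalerAl !wprod_cat wprod_word mulrA.
Qed.

Lemma wprod_spanned w : spanned (le^~ (wexp w)) (wprod w).
Proof.
move: w; suff spanned_le : forall d w, wexp w = d -> spanned (le^~ d) (wprod w).
  by move=> w; apply: spanned_le.
elim/(well_founded_ind (adm_wf pbw_adm)) => d IHd w.
move: {2}(inversions w) (erefl (inversions w)) => m.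
elim: m w => [|m IHm] w inv_w wexp_w.
  by rewrite inversions0_wprod // wexp_w; apply/spanned_mono/adm_refl.
have [u [v [i [j [lt_ij Ew]]]]] : exists u v (i j : 'I_n), (i < j)%N /\ w = u ++ j :: i :: v.
  by apply: inversions_gt0; rewrite inv_w.
rewrite Ew wprod_swap //; apply: spannedD.
  apply: spannedZ; apply: IHm; first by move: inv_w; rewrite Ew inversions_swap // => -[].
  by rewrite -wexp_w Ew; apply/ffunP => l; rewrite !ffunE !count_cat /=; lia.
rewrite big_seq; apply: spanned_sum => a supp_a; apply: spannedZ.
have lt_d : strict le (wexp (u ++ word a ++ v)) d.
  rewrite -wexp_w Ew (wexp_splice u [:: j; i]) wexp_splice wexp_word.
  have -> : wexp [:: j; i] = eadd (eps i) (eps j) by apply/ffunP => l; rewrite !ffunE /= addn0 addnC.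
  exact/strict_addr/pbw_supp.
apply: sub_spanned (IHd _ lt_d _ erefl) => c le_c.
by apply: adm_trans le_c _; case/andP: lt_d.
Qed.

Lemma mono_mul_spanned a b : spanned (le^~ (eadd a b)) (mono x a * mono x b).
Proof.
have := wprod_spanned (word a ++ word b).
by rewrite wprod_cat !wprod_word -[word a ++ _]cat0s wexp_splice !wexp_word.
Qed.

Definition lcoord (s : seq (k * expo n)) : {fsfun expo n -> k with 0} :=
  [fsfun a in [fset z.2 | z in s]%fset => \sum_(z <- s | z.2 == a) z.1].

Lemma lcoordE s a : lcoord s a = \sum_(z <- s | z.2 == a) z.1.
Proof.
rewrite fsfunE; case: ifP => // /negbT a_out; symmetry; apply: big1_seq => z /andP[/eqP za zs].
by case/negP: a_out; rewrite -za; apply: in_imfset.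
Qed.

Lemma lcoord_cat s1 s2 a : lcoord (s1 ++ s2) a = lcoord s1 a + lcoord s2 a.
Proof. by rewrite !lcoordE big_cat. Qed.

Lemma lcoord_mem s a : lcoord s a != 0 -> exists2 z, z \in s & z.2 = a.
Proof.
rewrite lcoordE; have [/hasP[z zs /eqP za] _|/hasPn no_a] := boolP (has (fun z => z.2 == a) s).
  by exists z.
by rewrite big1_seq ?eqxx // => z /andP[za /no_a]; rewrite za.
Qed.

Lemma rcoord_lcomb s : rcoord x (lcomb s) (lcoord s).
Proof.
set S := [fset z.2 | z in s]%fset.
have supp : (finsupp (lcoord s) `<=` S)%fset.
  by apply/fsubsetP => a; rewrite mem_finsupp fsfunE; case: ifP; rewrite ?eqxx.
rewrite /rcoord (big_fset_incl _ supp) => [|a _]; last first.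
  by rewrite mem_finsupp negbK => /eqP ->; rewrite scale0r.
under eq_bigr => a _ do rewrite lcoordE scaler_suml big_mkcond.
rewrite exchange_big /=; apply: eq_big_seq => z zs.
rewrite -big_mkcond /= -big_filter.
have -> : [seq a <- S | z.2 == a] = [:: z.2].
  rewrite -(@filter_pred1_uniq _ S z.2) ?fset_uniq ?in_imfset //.
  by apply: eq_filter => a /=; rewrite eq_sym.
by rewrite big_seq1.
Qed.

Lemma lcoord_eq0 s : lcomb s = 0 -> forall a, lcoord s a = 0.
Proof. by move=> s0; apply: pbw_free; rewrite -rcoord_lcomb. Qed.

Section ModuleExponent.
Variables (m : nat) (top : bool).
Local Notation lt_mod := (modord top (strict le)).

Lemma Rexp_leading (r : 'I_m -> R) (E : expo n) (i : 'I_m) (a : k) : a != 0 ->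
  (forall j, spanned (fun b => lt_mod (b, j) (E, i))
                     (r j - (if j == i then a *: mono x E else 0))) ->
  r <> (fun=> 0) /\ Rexp x lt_mod r (E, i).
Proof.
move=> a0 /fin_all_exists2[s Es Ps].
pose lead j := if j == i then [:: (a, E)] else [::].
have rE j : r j = lcomb (lead j ++ s j).
  rewrite lcomb_cat; have -> : lcomb (lead j) = if j == i then a *: mono x E else 0.
    by rewrite /lead /lcomb; case: (j == i); rewrite ?big_seq1 ?big_nil.
  by rewrite -Es addrC subrK.
have below j b : lcoord (s j) b != 0 -> lt_mod (b, j) (E, i).
  by case/lcoord_mem => z /Ps + <-.
have lcoordE_lead j b :
    lcoord (lead j ++ s j) b = (if (j == i) && (E == b) then a else 0) + lcoord (s j) b.
  by rewrite lcoord_cat lcoordE /lead; case: (j == i); rewrite /= ?big_cons big_nil ?addr0.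
have iE : lcoord (lead i ++ s i) E = a.
  rewrite lcoordE_lead !eqxx; suff -> : lcoord (s i) E = 0 by rewrite addr0.
  by apply/eqP; apply: contraT => /below; rewrite (negbTE (modord_irr top E i (strict_irr le))).
split=> [r0|].
  by move: a0; rewrite -iE lcoord_eq0 ?eqxx // -rE r0.
exists (fun j => lcoord (lead j ++ s j)); split=> [j||[b j] /=].
- by rewrite rE; apply: rcoord_lcomb.
- by rewrite iE.
rewrite lcoordE_lead.
case: andP => [[/eqP -> /eqP ->] _|_]; first by left.
by rewrite add0r => /below; right.
Qed.

Definition envmono (t : expo n * expo n) : R := mono x t.1 * mono x (eop t.2).

Lemma ms_leading (h : envvec k n m) (e : expo n * expo n * 'I_m) (P : 'I_m -> expo n -> Prop) :
  h e != 0 ->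
  (forall t, h t != 0 -> t != e -> spanned (P t.2) (envmono t.1)) ->
  forall j, spanned (P j) (ms x h j - (if j == e.2 then h e *: envmono e.1 else 0)).
Proof.
move=> he Pt j; rewrite /ms (big_rem e) ?mem_finsupp //= [e.2 == j]eq_sym addrC addrK.
rewrite big_seq_cond; apply: spanned_sum => t /andP[+ /eqP <-].
rewrite mem_rem_uniq ?fset_uniq // inE mem_finsupp => /andP[ne_te ht].
exact/spannedZ/Pt.
Qed.

Lemma modord_spanned (envlt : rel (expo n * expo n)) (e1 : expo n * expo n) (E : expo n)
    (i j : 'I_m) (t1 : expo n * expo n) :
  envmono e1 = mono x E ->
  (forall t, envlt t e1 -> spanned (strict le ^~ E) (envmono t)) ->
  modord top envlt (t1, j) (e1, i) -> spanned (fun b => lt_mod (b, j) (E, i)) (envmono t1).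
Proof.
move=> e1E below; case: top; rewrite /modord /TOP /POT /=.
  case/orP => [/below|/andP[/eqP -> lt_ij]].
    by apply: sub_spanned => b ->.
  by rewrite e1E; apply: spanned_mono; rewrite (negbTE (strict_irr _ _)) eqxx lt_ij.
case/orP => [lt_ij|/andP[/eqP -> /below]].
  by apply: sub_spanned (mono_mul_spanned _ _) => b _; rewrite lt_ij.
by apply: sub_spanned => b ->; rewrite eqxx orbT.
Qed.

Lemma ms_Rexp (envlt : rel (expo n * expo n)) (h : envvec k n m) (e1 : expo n * expo n)
    (E : expo n) (i : 'I_m) :
  envmono e1 = mono x E ->
  (forall t, envlt t e1 -> spanned (strict le ^~ E) (envmono t)) ->
  Eexp (modord top envlt) h (e1, i) ->
  ms x h <> (fun=> 0) /\ Rexp x lt_mod (ms x h) (E, i).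
Proof.
move=> e1E below [he hmax]; apply: (Rexp_leading he) => j.
have := ms_leading (P := fun j b => lt_mod (b, j) (E, i)) he _ j; rewrite /= e1E; apply.
move=> [t1 j'] ht /eqP ne_t /=; have [//|lt_t] := hmax _ ht.
exact: modord_spanned e1E below lt_t.
Qed.

End ModuleExponent.

Lemma mono0 : mono x (ezero n) = 1.
Proof. by apply: big1 => i _; rewrite ffunE. Qed.

Lemma envmono_r0 a : envmono (a, ezero n) = mono x a.
Proof. by rewrite /envmono eop0 mono0 mulr1. Qed.

Lemma envmono_l0 a : envmono (ezero n, a) = mono x (eop a).
Proof. by rewrite /envmono mono0 mul1r. Qed.

Lemma env_below_r0 (envlt : rel (expo n * expo n)) alpha :
  envlt = env_star (strict le) \/ envlt = env_c (strict le) ->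
  forall t, envlt t (alpha, ezero n) -> spanned (strict le ^~ alpha) (envmono t).
Proof.
case=> -> [a b]; rewrite /env_star /env_c /ltop /= eop0 (negbTE (strict_ge0 pbw_adm _)) /=.
  by case/andP => /eqP -> lt_a; rewrite envmono_r0; apply: spanned_mono.
rewrite eadd0r andbF orbF => lt_a; apply: sub_spanned (mono_mul_spanned _ _) => c le_c.
exact: (le_strict_trans pbw_adm le_c lt_a).
Qed.

Lemma env_below_l0 (envlt : rel (expo n * expo n)) alpha :
  envlt = env_lstar (strict le) \/ envlt = env_lc (strict le) ->
  forall t, envlt t (ezero n, alpha) -> spanned (strict le ^~ (eop alpha)) (envmono t).
Proof.
case=> -> [a b]; rewrite /env_lstar /env_lc /ltop /= (negbTE (strict_ge0 pbw_adm _)) /=.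
  by case/andP => /eqP -> lt_b; rewrite envmono_l0; apply: spanned_mono.
rewrite eadd0l andbF orbF => lt_a; apply: sub_spanned (mono_mul_spanned _ _) => c le_c.
exact: (le_strict_trans pbw_adm le_c lt_a).
Qed.

End PBWAlgebra.

Theorem mainTheorem5 (k : fieldType) (R : algType k) (n s : nat)
    (x : 'I_n -> R) (le : rel (expo n)) (q : 'I_n -> 'I_n -> k)
    (p : 'I_n -> 'I_n -> {fsfun expo n -> k with 0})
    (HPBW : PBW x le q p) (top : bool) :
  (forall (envlt : rel (expo n * expo n)),
     (envlt = env_star (strict le) \/ envlt = env_c (strict le)) ->
     forall (h : envvec k n s) (alpha : expo n) (i : 'I_s),
       Eexp (modord top envlt) h ((alpha, ezero n), i) ->
       ms x h <> (fun=> 0) /\ Rexp x (modord top (strict le)) (ms x h) (alpha, i))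
  /\
  (forall (envlt : rel (expo n * expo n)),
     (envlt = env_lstar (strict le) \/ envlt = env_lc (strict le)) ->
     forall (h : envvec k n s) (alpha : expo n) (i : 'I_s),
       Eexp (modord top envlt) h ((ezero n, alpha), i) ->
       ms x h <> (fun=> 0) /\ Rexp x (modord top (strict le)) (ms x h) (eop alpha, i)).
Proof.
split=> envlt Henv h alpha i.
  apply: (ms_Rexp HPBW); first exact: envmono_r0.
  exact: env_below_r0 HPBW _ _ Henv.
apply: (ms_Rexp HPBW); first exact: envmono_l0.
exact: env_below_l0 HPBW _ _ Henv.
Qed.
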